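(* Let $G$ be a connected graph and $P$ an isometric path in $G$ of length at least $2$. For every $v\in V(G)\setminus V(P)$, we have $|S_P(v)|=1$ if and only if there exists a bypath $B$ of $P$ in $G$ such that $v\in V(B)$.
   Context: $d$ denotes distance in $G$. A path $P$ in $G$ is isometric if $d_P(x,y)=d_G(x,y)$ for all $x,y\in V(P)$. The wide shadow of $v\in V(G)$ on $P$ is $S_P(v)=\{y\in V(P): d(y,x)\le d(v,x)\text{ for all }x\in V(P)\}$. For a subgraph $H$ of $G$ and an isometric path $P=v_1v_2\cdots v_k$ in $H$, a bypath of $P$ in $H$ is a path $B=b_1b_2\cdots b_t$ with $t\ge3$ and $V(B)\subseteq V(H)$, such that $b_1=v_i$, $b_t=v_j$ for some $1\le i<j\le k$, $V(B)\cap V(P)=\{v_i,v_j\}$, and the path $v_1\cdots v_i b_2\cdots b_{t-1} v_j\cdots v_k$ is also an isometric path in $H$. (Here $H=G$.) *)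

(* Finite simple graphs as symmetric irreflexive relations. *)
From mathcomp Require Import all_boot.
Set Implicit Arguments. Unset Strict Implicit. Unset Printing Implicit Defensive.

Section Graphs.
Variable T : finType.
Variable e : rel T.

Definition connected_graph : Prop := forall x y : T, connect e x y.

Definition walkn (x y : T) (n : nat) : bool :=
  [exists p : n.-tuple T, path e x p && (last x p == y)].

(* graph distance d_G(x,y): least n with a walk of length n from x to y.
   In a connected finite graph some walk of length < #|T| exists, so the
   search over 0..#|T|-1 returns the true distance. *)
Definition dist (x y : T) : nat := find (walkn x y) (iota 0 #|T|).

Definition is_path (s : seq T) : bool :=
  [&& s != [::], uniq s & sorted e s].

Definition path_dist (s : seq T) (x y : T) : nat :=
  (index x s - index y s) + (index y s - index x s).

Definition isometric_path (s : seq T) : Prop :=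
  is_path s /\ {in s &, forall x y, path_dist s x y = dist x y}.

Definition shadow (s : seq T) (v : T) : {set T} :=
  [set y | (y \in s) && [forall x in s, dist y x <= dist v x]].

(* B is a bypath of P = P1 ++ v_i :: P2 ++ v_j :: P3 : B = v_i b_2 .. b_{t-1} v_j
   with t >= 3 (mid nonempty), B a path, V(B) cap V(P) = {v_i, v_j}, and
   P1 ++ v_i :: mid ++ v_j :: P3 an isometric path. *)
Definition bypath (P B : seq T) : Prop :=
  exists (P1 P2 P3 mid : seq T) (vi vj : T),
    [/\ P = P1 ++ vi :: P2 ++ vj :: P3,
        B = vi :: mid ++ [:: vj],
        mid != [::],
        is_path B &
        (forall y, y \in B -> y \in P -> y = vi \/ y = vj) ] /\
    isometric_path (P1 ++ vi :: mid ++ vj :: P3).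

End Graphs.

From mathcomp Require Import all_boot zify.
Set Implicit Arguments. Unset Strict Implicit. Unset Printing Implicit Defensive.

(* Write P = v_0 ... v_(k-1) and f(l) = d(v, v_l).  A vertex v_q is in the wide
   shadow of v iff |q - l| <= f(l) for every l.  If v lies on a shortest
   v_i--v_j path at distance q - i from v_i, the triangle inequality shows that
   the shadow is exactly {v_q}; cutting that shortest path at the last vertex of
   P before v and the first one after v gives a bypath through v.  Conversely,
   if the shadow is {v_p}, then f(b) = p - b and f(a) = a - p for some b < p < a,
   for otherwise v_(p+1) or v_(p-1) would be in the shadow too; so v lies on a
   shortest v_b--v_a path.  Finally, a bypath through v has the same length as
   the segment of P it replaces, which places v on a shortest path of this kind. *)

Section Mkseq.
Variable T : Type.

Lemma mkseqD (f : nat -> T) m n :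
  mkseq f (m + n) = mkseq f m ++ mkseq (fun r => f (m + r)) n.
Proof.
rewrite /mkseq iotaD map_cat add0n; congr (_ ++ _).
by rewrite -{1}[m]addn0 iotaDl -map_comp.
Qed.

Lemma mkseq_split1 (f : nat -> T) i k : i < k ->
  mkseq f k = mkseq f i ++ f i :: mkseq (fun r => f (i.+1 + r)) (k - i.+1).
Proof.
move=> ik; set n := k - i.+1; have -> : k = i + (1 + n) by rewrite /n; lia.
rewrite mkseqD mkseqD /= addn0; congr (_ ++ _ :: _).
by apply: eq_mkseq => r /=; congr f; lia.
Qed.

Lemma mkseq_split (f : nat -> T) i j k : i < j -> j < k ->
  mkseq f k = mkseq f i ++ f i :: mkseq (fun r => f (i.+1 + r)) (j - i.+1)
     ++ f j :: mkseq (fun r => f (j.+1 + r)) (k - j.+1).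
Proof.
move=> ij jk; rewrite (mkseq_split1 f (i := i)); last by lia.
congr (_ ++ _ :: _); rewrite (mkseq_split1 _ (i := j - i.+1)); last by lia.
congr (_ ++ _ :: _); first by congr f; lia.
have -> : k - i.+1 - (j - i.+1).+1 = k - j.+1 by lia.
by apply: eq_mkseq => r /=; congr f; lia.
Qed.

End Mkseq.

Lemma last_before (A : pred nat) b p : b <= p -> A b ->
  exists i, [/\ b <= i <= p, A i & forall u, i < u <= p -> ~~ A u].
Proof.
move=> bp Ab.
have ex : exists i, (b <= i <= p) && A i by exists b; rewrite leqnn bp.
have ub i : (b <= i <= p) && A i -> i <= p by case/andP => /andP[].
case: (ex_maxnP ex ub) => i /andP[ibp Ai] imax; exists i; split => // u /andP[iu up].
by apply/negP => Au; have := imax u; rewrite Au up andbT; lia.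
Qed.

Lemma first_after (A : pred nat) p a : p <= a -> A a ->
  exists j, [/\ p <= j <= a, A j & forall u, p <= u < j -> ~~ A u].
Proof.
move=> pa Aa.
have ex : exists j, (p <= j <= a) && A j by exists a; rewrite leqnn pa.
case: (ex_minnP ex) => j /andP[pja Aj] jmin; exists j; split => // u /andP[pu uj].
by apply/negP => Au; have := jmin u; rewrite Au pu andbT; lia.
Qed.

Definition shadow_index (k : nat) (f : nat -> nat) (q : nat) : Prop :=
  forall l, l < k -> q - l + (l - q) <= f l.

Section ShadowIndex.
Variables (k : nat) (f : nat -> nat) (p : nat).
Hypotheses (k_gt1 : 1 < k) (p_lt_k : p < k) (f_gt0 : forall l, l < k -> 0 < f l).
Hypothesis shadow_p : shadow_index k f p.
Hypothesis shadow_uniq : forall q, q < k -> shadow_index k f q -> q = p.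

Lemma shadow_index_tight_below : exists2 b, b < k & b + f b = p.
Proof.
(* Otherwise p + 1, or p - 1 if p is the last index, is a shadow index too. *)
have [/hasP [b] | /hasPn loose] := boolP (has (fun b => b + f b == p) (iota 0 k)).
  by rewrite mem_iota => /andP[_ bk] /eqP; exists b.
have slack l : l < k -> p < l + f l.
  move=> lk; have := loose l; rewrite mem_iota lk => /(_ isT) /eqP.
  by have := shadow_p lk; lia.
have [p1k | k_le_p1] := ltnP p.+1 k.
  suff /(shadow_uniq p1k) : shadow_index k f p.+1 by lia.
  by move=> l lk; have := shadow_p lk; have := slack l lk; lia.
have p1k : p.-1 < k by lia.
suff /(shadow_uniq p1k) : shadow_index k f p.-1 by lia.
by move=> l lk; have := shadow_p lk; have := f_gt0 lk; lia.
Qed.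

Lemma shadow_index_tight_above : exists2 a, a < k & a = p + f a.
Proof.
(* Otherwise p - 1, or 1 if p = 0, is a shadow index too. *)
have [/hasP [a] | /hasPn loose] := boolP (has (fun a => a == p + f a) (iota 0 k)).
  by rewrite mem_iota => /andP[_ ak] /eqP; exists a.
have slack l : l < k -> l < p + f l.
  move=> lk; have := loose l; rewrite mem_iota lk => /(_ isT) /eqP.
  by have := shadow_p lk; lia.
have [p0 | p_gt0] := posnP p.
  suff /(shadow_uniq k_gt1) : shadow_index k f 1 by lia.
  by move=> l lk; have := shadow_p lk; have := f_gt0 lk; lia.
have p1k : p.-1 < k by lia.
suff /(shadow_uniq p1k) : shadow_index k f p.-1 by lia.
by move=> l lk; have := shadow_p lk; have := slack l lk; lia.
Qed.

End ShadowIndex.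

Section Distance.
Variables (T : finType) (e : rel T).

Definition is_walk (g : nat -> T) (n : nat) : Prop :=
  forall r, r < n -> e (g r) (g r.+1).

Lemma walknP x y n :
  reflect (exists g, [/\ g 0 = x, g n = y & is_walk g n]) (walkn e x y n).
Proof.
apply: (iffP existsP).
  case=> p /andP [ep /eqP lastp].
  exists (fun r => nth x (x :: p) r); split => //.
    by have := nth_last x (x :: p); rewrite /= size_tuple lastp.
  by move=> r rn; move/(pathP x): ep; apply; rewrite size_tuple.
case=> g [g0 gn eg].
have sz : size (mkseq (fun r => g r.+1) n) == n by rewrite size_mkseq.
exists (Tuple sz) => /=; apply/andP; split.
  apply/(pathP x) => r; rewrite size_mkseq => rn.
  rewrite nth_mkseq //; case: r rn => [|r] rn /=; first by rewrite -g0; apply: eg.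
  by rewrite nth_mkseq; [apply: eg | lia].
apply/eqP; rewrite -nth_last size_mkseq -gn -g0.
by case: n {eg sz gn} => [|n] //; rewrite nth_mkseq.
Qed.

Lemma is_walk_cat g1 g2 m n : is_walk g1 m -> is_walk g2 n -> g1 m = g2 0 ->
  exists g, [/\ is_walk g (m + n), forall r, r <= m -> g r = g1 r
              & forall r, r <= n -> g (m + r) = g2 r].
Proof.
move=> eg1 eg2 g12; exists (fun r => if r <= m then g1 r else g2 (r - m)); split.
- move=> r rmn; case: ifP => rm; case: ifP => r1m.
  + by apply: eg1; lia.
  + have -> : r = m by lia.
    by rewrite subSnn g12; apply: eg2; lia.
  + lia.
  + have -> : r.+1 - m = (r - m).+1 by lia.
    by apply: eg2; lia.
- by move=> r ->.
- move=> r rn; case: ifP => [mrm | _]; last by rewrite addKn.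
  have r0 : r = 0 by lia.
  by rewrite r0 addn0 g12.
Qed.

Lemma walkn_sub g n s t : is_walk g n -> s <= t <= n -> walkn e (g s) (g t) (t - s).
Proof.
move=> eg stn; apply/walknP; exists (fun r => g (s + r)); split.
- by rewrite addn0.
- by congr g; lia.
- by move=> r rts; rewrite addnS; apply: eg; lia.
Qed.

Hypothesis connected : connected_graph e.

Lemma has_walkn x y : has (walkn e x y) (iota 0 #|T|).
Proof.
have /connectP [p ep ->] := connected x y.
have [p' ep' up' _] := shortenP ep.
apply/hasP; exists (size p').
  by rewrite mem_iota; have := max_card (mem (x :: p')); rewrite (card_uniqP up').
by apply/existsP; exists (in_tuple p'); rewrite /= ep' eqxx.
Qed.

Lemma dist_lt_card x y : dist e x y < #|T|.
Proof. by rewrite -[X in _ < X](size_iota 0) -has_find has_walkn. Qed.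

Lemma dist_walkn x y : walkn e x y (dist e x y).
Proof. by have := nth_find 0 (has_walkn x y); rewrite nth_iota ?dist_lt_card. Qed.

Lemma dist_le_walkn x y n : walkn e x y n -> dist e x y <= n.
Proof.
move=> walk_n; rewrite leqNgt; apply/negP => n_lt.
have := before_find 0 n_lt; rewrite nth_iota ?walk_n //.
by have := dist_lt_card x y; lia.
Qed.

Lemma dist_walk_le g n s t : is_walk g n -> s <= t <= n -> dist e (g s) (g t) <= t - s.
Proof. by move=> eg stn; apply/dist_le_walkn/(walkn_sub eg). Qed.

Lemma dist_xx x : dist e x x = 0.
Proof. by apply/eqP; rewrite -leqn0; apply/dist_le_walkn/walknP; exists (fun=> x). Qed.

Lemma dist_eq0 x y : dist e x y = 0 -> x = y.
Proof.
move=> d0; have /walknP [g [g0 gd _]] := dist_walkn x y.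
by rewrite -g0 -gd d0.
Qed.

Lemma dist1_edge x y : dist e x y = 1 -> e x y.
Proof.
move=> d1; have /walknP [g [g0 gd eg]] := dist_walkn x y.
by rewrite -g0 -gd d1; apply: eg; rewrite d1.
Qed.

Lemma dist_geodesic x y z : dist e x y + dist e y z = dist e x z ->
  exists g, [/\ is_walk g (dist e x z), g 0 = x, g (dist e x y) = y
              & g (dist e x z) = z].
Proof.
move=> dxyz.
have /walknP [g1 [g10 g1m eg1]] := dist_walkn x y.
have /walknP [g2 [g20 g2n eg2]] := dist_walkn y z.
have [g [eg gl gr]] := is_walk_cat eg1 eg2 (etrans g1m (esym g20)).
exists g; rewrite -dxyz; split => //.
- by rewrite gl.
- by rewrite gl.
- by rewrite gr.
Qed.

Lemma dist_triangle x y z : dist e x z <= dist e x y + dist e y z.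
Proof.
have /walknP [g1 [g10 g1m eg1]] := dist_walkn x y.
have /walknP [g2 [g20 g2n eg2]] := dist_walkn y z.
have [g [eg gl gr]] := is_walk_cat eg1 eg2 (etrans g1m (esym g20)).
apply/dist_le_walkn/walknP; exists g; split => //.
- by rewrite gl.
- by rewrite gr.
Qed.

Hypothesis e_sym : symmetric e.

Lemma dist_sym x y : dist e x y = dist e y x.
Proof.
suff le_dist a b : dist e a b <= dist e b a by apply/eqP; rewrite eqn_leq !le_dist.
have /walknP [g [g0 gn eg]] := dist_walkn b a.
apply/dist_le_walkn/walknP; exists (fun r => g (dist e b a - r)); split.
- by rewrite subn0.
- by rewrite subnn.
- move=> r rn; rewrite e_sym; have -> : dist e b a - r = (dist e b a - r.+1).+1 by lia.
  by apply: eg; lia.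
Qed.

Lemma geodesic_dist g n : is_walk g n -> n <= dist e (g 0) (g n) ->
  forall s t, s <= n -> t <= n -> dist e (g s) (g t) = s - t + (t - s).
Proof.
move=> eg n_le.
suff ordered s t : s <= t <= n -> dist e (g s) (g t) = t - s.
  move=> s t sn tn; have [st | ts] := leqP s t.
    by rewrite ordered ?st //; lia.
  by rewrite dist_sym ordered; lia.
move=> /andP[st tn].
have := dist_walk_le eg (s := 0) (t := s) ltac:(lia).
have := dist_walk_le eg (s := s) (t := t) ltac:(lia).
have := dist_walk_le eg (s := t) (t := n) ltac:(lia).
have := dist_triangle (g 0) (g s) (g n); have := dist_triangle (g s) (g t) (g n).
lia.
Qed.

End Distance.

Section IsometricPath.
Variables (T : finType) (e : rel T).
Hypotheses (e_sym : symmetric e) (connected : connected_graph e).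
Let distC := dist_sym connected e_sym.
Let distT := dist_triangle connected.

Lemma isometric_path_uniq P : isometric_path e P -> uniq P.
Proof. by case=> /and3P[]. Qed.

Lemma isometric_path_dist_nth (x0 : T) P : isometric_path e P ->
  forall r s, r < size P -> s < size P ->
  dist e (nth x0 P r) (nth x0 P s) = r - s + (s - r).
Proof.
case=> /and3P [_ uP _] isoP r s rP sP.
by rewrite -isoP ?mem_nth // /path_dist !index_uniq.
Qed.

Lemma isometric_path_mkseq (g : nat -> T) n : 0 < n ->
  (forall r s, r < n -> s < n -> dist e (g r) (g s) = r - s + (s - r)) ->
  isometric_path e (mkseq g n).
Proof.
move=> n_gt0 dg.
have uniq_g : uniq (mkseq g n).
  by apply/mkseq_uniqP => r s rn sn grs; have := dg r s rn sn; rewrite grs dist_xx //; lia.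
have index_g r : r < n -> index (g r) (mkseq g n) = r.
  by move=> rn; rewrite -{1}(nth_mkseq (g 0) g rn) index_uniq ?size_mkseq.
split.
  apply/and3P; split => //; first by rewrite -size_eq0 size_mkseq -lt0n.
  case: n n_gt0 {index_g uniq_g} dg => [//|n] _ dg.
  rewrite (mkseq_split1 g (i := 0)) //= subn1 /=.
  apply/(pathP (g 0)) => r; rewrite size_mkseq => rn.
  rewrite nth_mkseq //; case: r rn => [|r] rn /=.
    by apply: (dist1_edge connected); rewrite dg //; lia.
  by rewrite nth_mkseq; [apply: (dist1_edge connected); rewrite dg //; lia | lia].
move=> _ _ /mapP [r + ->] /mapP [s + ->]; rewrite !mem_iota => rn sn.
by rewrite /path_dist !index_g ?dg //; lia.
Qed.

Definition splice (X Q : nat -> T) (i j : nat) (r : nat) : T :=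
  if i <= r <= j then Q r else X r.

Lemma splice_dist (X Q : nat -> T) k i j : i <= j < k ->
  (forall r s, r < k -> s < k -> dist e (X r) (X s) = r - s + (s - r)) ->
  Q i = X i -> Q j = X j ->
  (forall u w, i <= u <= j -> i <= w <= j -> dist e (Q u) (Q w) = u - w + (w - u)) ->
  forall r s, r < k -> s < k ->
  dist e (splice X Q i j r) (splice X Q i j s) = r - s + (s - r).
Proof.
move=> ijk dX Qi Qj dQ.
have dXQ r u : r < k -> ~~ (i <= r <= j) -> i <= u <= j ->
    dist e (X r) (Q u) = r - u + (u - r).
  move=> rk r_out uij.
  have dQi : dist e (Q u) (X i) = u - i by rewrite -Qi dQ //; lia.
  have dQj : dist e (Q u) (X j) = j - u by rewrite -Qj dQ //; lia.
  have := distT (X r) (X i) (Q u).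
  have := distT (X r) (X j) (Q u).
  have := distT (X r) (Q u) (X i).
  have := distT (X r) (Q u) (X j).
  rewrite !(distC (X _) (Q u)) dQi dQj !dX //; lia.
move=> r s rk sk; rewrite /splice.
case: ifP => r_in; case: ifP => s_in.
- by rewrite dQ.
- by rewrite distC dXQ ?s_in //; lia.
- by rewrite dXQ ?r_in.
- exact: dX.
Qed.

End IsometricPath.

Section Shadow.
Variables (T : finType) (e : rel T).
Hypotheses (e_sym : symmetric e) (connected : connected_graph e).
Variables (P : seq T) (x0 : T).
Hypothesis P_iso : isometric_path e P.
Local Notation k := (size P).
Local Notation X := (nth x0 P).
Let distC := dist_sym connected e_sym.
Let distT := dist_triangle connected.
Let distX := isometric_path_dist_nth x0 P_iso.

Lemma shadow_nth v q : q < k ->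
  X q \in shadow e P v <-> shadow_index k (fun l => dist e v (X l)) q.
Proof.
move=> qk; rewrite inE mem_nth //=; split.
  by move=> /forall_inP S l lk; have := S (X l) (mem_nth x0 lk); rewrite distX.
move=> S; apply/forall_inP => x xP.
by rewrite -(nth_index x0 xP) distX ?index_mem //; apply: S; rewrite index_mem.
Qed.

Lemma shadow_between v i q j : i <= q <= j -> j < k ->
  dist e v (X i) = q - i -> dist e v (X j) = j - q -> shadow e P v = [set X q].
Proof.
move=> iqj jk dvi dvj.
have index_q l : l < k -> shadow_index k (fun l => dist e v (X l)) l <-> l = q.
  move=> lk; split => [S | -> r rk].
    by have := S i ltac:(lia); have := S j jk; rewrite dvi dvj; lia.
  have := distT (X i) v (X r); have := distT (X j) v (X r).
  by rewrite (distC (X i) v) (distC (X j) v) dvi dvj !distX //; lia.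
apply/setP => y; rewrite in_set1; apply/idP/eqP => [Sy | ->]; last first.
  by apply/shadow_nth/index_q; lia.
have yP : y \in P by move: Sy; rewrite inE => /andP[].
have yk : index y P < k by rewrite index_mem.
rewrite -(nth_index x0 yP) in Sy *.
by move/(shadow_nth v yk)/(index_q _ yk): Sy => ->.
Qed.

Lemma path_vertex_between z i u j : z \in P -> i <= u <= j -> j < k ->
  dist e (X i) z = u - i -> dist e z (X j) = j - u -> z = X u.
Proof.
move=> zP uij jk; have ik : i < k by lia.
rewrite -(nth_index x0 zP) !distX ?index_mem // => diz dzj.
by congr nth; lia.
Qed.

(* v lies on a shortest v_i--v_j path, at the place v_q has on P. *)
Definition lies_between (v : T) : Prop :=
  exists i q j,
    [/\ i < q < j, j < k, dist e v (X i) = q - i & dist e v (X j) = j - q].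

Lemma between_of_shadow1 v : 1 < k -> v \notin P -> #|shadow e P v| = 1 ->
  lies_between v.
Proof.
move=> k_gt1 vP /eqP/cards1P [y Sy1].
have yP : y \in P by have := set11 y; rewrite -Sy1 inE => /andP[].
set p := index y P; have pk : p < k by rewrite index_mem.
have Xp : X p = y by rewrite nth_index.
set f := fun l => dist e v (X l).
have f_gt0 l : l < k -> 0 < f l.
  move=> lk; rewrite lt0n; apply: contra vP => /eqP/(dist_eq0 connected) ->.
  exact: mem_nth.
have Sp : shadow_index k f p by apply/shadow_nth; rewrite // Xp Sy1 set11.
have Suniq q : q < k -> shadow_index k f q -> q = p.
  move=> qk /(shadow_nth v qk); rewrite Sy1 in_set1 -Xp nth_uniq ?(isometric_path_uniq P_iso) //.
  by move/eqP.
have [b bk fb] := shadow_index_tight_below k_gt1 pk f_gt0 Sp Suniq.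
have [a ak fa] := shadow_index_tight_above k_gt1 pk f_gt0 Sp Suniq.
have := f_gt0 b bk; have := f_gt0 a ak.
by exists b, p, a; split; rewrite -/(f _); lia.
Qed.

Lemma bypath_of_splice (Q : nat -> T) i j : i.+1 < j -> j < k ->
  Q i = X i -> Q j = X j ->
  (forall u w, i <= u <= j -> i <= w <= j -> dist e (Q u) (Q w) = u - w + (w - u)) ->
  (forall u, i < u < j -> Q u \notin P) ->
  bypath e P (mkseq (fun r => Q (i + r)) (j - i).+1).
Proof.
move=> ij jk Qi Qj dQ Q_out.
set mid := mkseq (fun r => Q (i.+1 + r)) (j - i.+1).
have P_split : P = mkseq X i ++ X i :: mkseq (fun r => X (i.+1 + r)) (j - i.+1)
                     ++ X j :: mkseq (fun r => X (j.+1 + r)) (k - j.+1).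
  by rewrite -{1}(mkseq_nth x0 P); apply: mkseq_split; lia.
have B_split : mkseq (fun r => Q (i + r)) (j - i).+1 = X i :: mid ++ [:: X j].
  rewrite (mkseq_split _ (i := 0) (j := j - i)) ?subnn /=; try lia.
  rewrite addn0 Qi subnKC ?Qj; last lia.
  congr (_ :: _ ++ _); have -> : j - i - 1 = j - i.+1 by lia.
  by apply: eq_mkseq => r; congr Q; lia.
have P'_split : mkseq (splice X Q i j) k =
    mkseq X i ++ X i :: mid ++ X j :: mkseq (fun r => X (j.+1 + r)) (k - j.+1).
  rewrite (mkseq_split _ (i := i) (j := j)) //; last lia.
  congr (_ ++ _ :: _ ++ _ :: _); rewrite /splice; try (apply/eq_in_map => r;
    rewrite mem_iota => r_in; case: ifP => //; lia).
  - by rewrite Qi; case: ifP.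
  - by rewrite Qj; case: ifP.
rewrite /bypath; exists (mkseq X i), (mkseq (fun r => X (i.+1 + r)) (j - i.+1)),
  (mkseq (fun r => X (j.+1 + r)) (k - j.+1)), mid, (X i), (X j).
split; first split.
- exact: P_split.
- exact: B_split.
- by rewrite -size_eq0 size_mkseq; lia.
- suff [] : isometric_path e (mkseq (fun r => Q (i + r)) (j - i).+1) by [].
  by apply: isometric_path_mkseq => // r s rn sn; rewrite dQ; lia.
- move=> y /mapP [r + ->]; rewrite mem_iota add0n => r_lt QP.
  have [-> | r_gt0] := posnP r; first by left; rewrite addn0.
  have [-> | r_ne] := eqVneq r (j - i); first by right; rewrite subnKC // ltnW // ltnW.
  have : i < i + r < j by lia.
  by move/Q_out; rewrite QP.
rewrite -P'_split; apply: isometric_path_mkseq => //; first lia.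
by apply: splice_dist => //; lia.
Qed.

Lemma shortest_path_through v i q j : i <= q <= j -> j < k ->
  dist e v (X i) = q - i -> dist e v (X j) = j - q ->
  exists Q : nat -> T, [/\ Q i = X i, Q q = v, Q j = X j,
    forall u w, i <= u <= j -> i <= w <= j -> dist e (Q u) (Q w) = u - w + (w - u)
  & forall u, i <= u <= j -> Q u \in P -> Q u = X u].
Proof.
move=> /andP[iq qj] jk dvi dvj.
have dij : dist e (X i) (X j) = j - i by rewrite distX //; lia.
have [g [eg g0 gv gj]] : exists g, [/\ is_walk e g (dist e (X i) (X j)), g 0 = X i,
    g (dist e (X i) v) = v & g (dist e (X i) (X j)) = X j].
  by apply: (dist_geodesic connected); rewrite (distC (X i)) dvi dvj dij; lia.
rewrite distC dvi in gv; rewrite dij in eg gj.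
pose Q u := g (u - i).
have dQ u w : i <= u <= j -> i <= w <= j -> dist e (Q u) (Q w) = u - w + (w - u).
  move=> uij wij; rewrite /Q (geodesic_dist connected e_sym eg) ?gj ?g0 ?dij //; lia.
have Qi : Q i = X i by rewrite /Q subnn.
have Qj : Q j = X j by rewrite /Q.
exists Q; split => // u uij QuP; apply: (path_vertex_between QuP uij jk).
  by rewrite -Qi dQ //; lia.
by rewrite -Qj dQ //; lia.
Qed.

Lemma bypath_of_between v : v \notin P -> lies_between v ->
  exists B, bypath e P B /\ v \in B.
Proof.
move=> vP [i [q [j [/andP [iq qj] jk dvi dvj]]]].
have iqj : i <= q <= j by rewrite (ltnW iq) (ltnW qj).
have ik : i < k by lia.
have [Q [Qi Qq Qj dQ QP]] := shortest_path_through iqj jk dvi dvj.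
have QiP : Q i \in P by rewrite Qi mem_nth.
have QjP : Q j \in P by rewrite Qj mem_nth.
have [i' [/andP[ii' i'q] Qi'P i'_last]] :=
  last_before (A := fun u => Q u \in P) (ltnW iq) QiP.
have [j' [/andP[qj' j'j] Qj'P j'_first]] :=
  first_after (A := fun u => Q u \in P) (ltnW qj) QjP.
have i'_lt_q : i' < q.
  by rewrite ltn_neqAle i'q andbT; apply: contraNneq vP => i'_q; rewrite -Qq -i'_q.
have q_lt_j' : q < j'.
  by rewrite ltn_neqAle qj' andbT; apply: contraNneq vP => q_j'; rewrite -Qq q_j'.
exists (mkseq (fun r => Q (i' + r)) (j' - i').+1); split.
  apply: bypath_of_splice; first lia; first lia.
  - by apply: QP; rewrite ?ii' //; lia.
  - by apply: QP; rewrite ?j'j //; lia.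
  - by move=> u w uij wij; apply: dQ; lia.
  move=> u /andP[i'u uj']; have [uq | qu] := leqP u q.
    by apply: i'_last; rewrite i'u.
  by apply: j'_first; rewrite uj' ltnW.
apply/mapP; exists (q - i'); first by rewrite mem_iota; lia.
by rewrite subnKC ?Qq // ltnW.
Qed.

Lemma between_of_bypath v B : v \notin P -> bypath e P B -> v \in B ->
  lies_between v.
Proof.
move=> vP [P1 [P2 [P3 [mid [vi [vj [[P_eq B_eq _ _ _] P'_iso]]]]]]] vB.
set P' := P1 ++ vi :: mid ++ vj :: P3 in P'_iso.
have distY := isometric_path_dist_nth x0 P'_iso.
set i := size P1; set j := i + (size P2).+1; set n := (size mid).+1.
have ij : i < j by rewrite /j; lia.
have jk : j < k by rewrite P_eq size_cat /= size_cat /=; lia.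
have inP' : i + n < size P' by rewrite size_cat /= size_cat /=; lia.
have Xi : X i = vi by rewrite P_eq nth_cat ltnn subnn.
have Xj : X j = vj by rewrite P_eq -cat_cons catA nth_cat size_cat /= ltnn subnn.
have Yi : nth x0 P' i = vi by rewrite nth_cat ltnn subnn.
have Yj : nth x0 P' (i + n) = vj.
  by rewrite /P' -cat_cons catA nth_cat size_cat /= ltnn subnn.
have v_mid : v \in mid.
  move: vB; rewrite B_eq inE mem_cat inE => /or3P [/eqP v_vi | // | /eqP v_vj].
  - by move: vP; rewrite v_vi -Xi mem_nth // (ltn_trans ij).
  - by move: vP; rewrite v_vj -Xj mem_nth.
set m := (index v mid).+1.
have m_gt0 : 0 < m by [].
have mn : m < n by rewrite /m ltnS index_mem.
have Yv : nth x0 P' (i + m) = v.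
  by rewrite nth_cat ltnNge leq_addr /= addKn /= nth_cat index_mem v_mid nth_index.
have nj : n = j - i.
  have := distX (ltn_trans ij jk) jk; have := distY _ _ (leq_ltn_trans (leq_addr n i) inP') inP'.
  by rewrite Xi Xj Yi Yj; lia.
exists i, (i + m), j; split; first lia; first lia.
  by rewrite -Yv Xi -Yi distY; lia.
by rewrite -Yv Xj -Yj distY; lia.
Qed.

End Shadow.

Theorem lemma2p8 (T : finType) (e : rel T) :
  symmetric e -> irreflexive e -> connected_graph e ->
  forall P : seq T, isometric_path e P -> 3 <= size P ->
  forall v : T, v \notin P ->
    (#|shadow e P v| = 1 <-> exists B : seq T, bypath e P B /\ v \in B).
Proof.
move=> e_sym _ connected P P_iso P_size v vP; split => [shadow1 | [B [PB vB]]].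
  apply: (bypath_of_between e_sym connected P_iso vP).
  by apply: (between_of_shadow1 connected v P_iso) => //; lia.
have [i [q [j [/andP [iq qj] jk dvi dvj]]]] := between_of_bypath v P_iso vP PB vB.
have iqj : i <= q <= j by rewrite (ltnW iq) (ltnW qj).
by rewrite (shadow_between e_sym connected P_iso iqj jk dvi dvj) cards1.
Qed.
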